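(* Let $q\ge1$, let $n\ge1$ be an integer, $N=\dim\Pi_n^q$, let $\mathcal C$ be a finite set of points on $\mathbb S^q$ and $\nu$ a measure supported on $\mathcal C$ with $v_\xi:=\nu(\{\xi\})>0$, $\xi\in\mathcal C$. (a) If the Gram matrix $G_N$ is positive definite, then the weights $w^{LSQ}_\xi$ are solutions of the extremal problem: minimize $\sum_{\xi\in\mathcal C}w_\xi^2/v_\xi$ over real $(w_\xi)_{\xi\in\mathcal C}$ subject to $\sum_{\xi\in\mathcal C}w_\xi y_\ell(\xi)=\delta_{1,\ell}$ for $\ell=1,\dots,N$. (b) Suppose there are constants $c_1,c_2>0$ with $$c_1\|P\|_p\le\Big\{\sum_{\xi\in\mathcal C}v_\xi|P(\xi)|^p\Big\}^{1/p}\le c_2\|P\|_p,\qquad P\in\Pi_n^q,\ 1\le p\le\infty$$ (for $p=\infty$ the middle term means $\max_{\xi\in\mathcal C}|P(\xi)|$). Then there exist real numbers $W_\xi$, $\xi\in\mathcal C$, such that $|W_\xi|\le c\,v_\xi$ for $\xi\in\mathcal C$, with a constant $c$ depending only on $c_1$, and $\sum_{\xi\in\mathcal C}W_\xi P(\xi)=\int P\,d\mu_q$ for all $P\in\Pi_n^q$.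
   Context: $\mathbb S^q$ is the unit sphere in $\mathbb R^{q+1}$, $\mu_q$ its surface measure normalized to total mass $1$, $\|\cdot\|_p$ the $L^p(\mu_q)$ norm. $\Pi_n^q$ is the space of spherical polynomials of degree at most $n$. Let $y_1,\dots,y_N$ be an orthonormal basis of $\Pi_n^q$ with respect to $\mu_q$ consisting of orthonormal spherical harmonics, ordered with $y_1\equiv1$ and lower degrees first. The Gram matrix is $(G_N)_{\ell,k}=\sum_{\xi\in\mathcal C}v_\xi y_\ell(\xi)y_k(\xi)$. The least-squares weights are $w^{LSQ}_\xi:=v_\xi\sum_{k=1}^N(G_N^{-1})_{1,k}y_k(\xi)$. *)

From mathcomp Require Import all_boot all_order all_algebra.
From mathcomp Require Import all_classical all_reals all_analysis.
Set Implicit Arguments. Unset Strict Implicit. Unset Printing Implicit Defensive.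
Import Order.TTheory GRing.Theory Num.Theory.
Local Open Scope ring_scope.

Section SphereDefs.
Variable R : realType.

Definition enorm (m : nat) (x : 'rV[R]_m) : R := Num.sqrt (\sum_i x ord0 i ^+ 2).

Definition on_sphere (q : nat) (x : 'rV[R]_q.+1) : Prop := enorm x = 1.

(* iint k f = \int dx_1 ... \int dx_k f [:: x_1; ...; x_k]  (Tonelli: this is the
   Lebesgue integral on R^k for nonnegative measurable f) *)
Fixpoint iint (k : nat) (f : seq R -> \bar R) : \bar R :=
  match k with
  | 0 => f [::]
  | k'.+1 => (\int[@lebesgue_measure R]_x iint k' (fun s => f (x :: s)))%E
  end.

Definition vec_of (k : nat) (s : seq R) : 'rV[R]_k := \row_i nth 0 s i.

Definition volint (k : nat) (f : 'rV[R]_k -> \bar R) : \bar R :=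
  iint k (fun s => f (vec_of k s)).

(* \int g d mu_q = vol({ r x : 0 < r <= 1, x in S^q } weighted by g) / vol(unit ball) *)
Definition ball_ind (q : nat) (x : 'rV[R]_q.+1) : \bar R :=
  if enorm x <= 1 then 1%E else 0%E.

Definition cone_ext (q : nat) (g : 'rV[R]_q.+1 -> \bar R) (x : 'rV[R]_q.+1) : \bar R :=
  if (0 < enorm x) && (enorm x <= 1) then g ((enorm x)^-1 *: x) else 0%E.

Definition sph_int_nn (q : nat) (g : 'rV[R]_q.+1 -> \bar R) : \bar R :=
  (volint (cone_ext g) * ((fine (volint (@ball_ind q)))^-1)%:E)%E.

Definition sph_int (q : nat) (f : 'rV[R]_q.+1 -> R) : R :=
  fine (sph_int_nn (fun x => (Num.max (f x) 0)%:E))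
  - fine (sph_int_nn (fun x => (Num.max (- f x) 0)%:E)).

Definition sph_esssup (q : nat) (f : 'rV[R]_q.+1 -> R) : R :=
  inf [set M : R | 0 <= M /\
         sph_int_nn (fun x => if M < `|f x| then 1%E else 0%E) = 0%E].

Definition Lpnorm (q : nat) (p : \bar R) (f : 'rV[R]_q.+1 -> R) : R :=
  match p with
  | EFin r => (sph_int (fun x => `|f x| `^ r)) `^ r^-1
  | +oo%E => sph_esssup f
  | -oo%E => 0
  end.

Definition dnorm (q : nat) (C : seq 'rV[R]_q.+1) (v : 'rV[R]_q.+1 -> R)
    (p : \bar R) (f : 'rV[R]_q.+1 -> R) : R :=
  match p with
  | EFin r => (\sum_(xi <- C) v xi * `|f xi| `^ r) `^ r^-1
  | +oo%E => \big[Num.max/0]_(xi <- C) `|f xi|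
  | -oo%E => 0
  end.

Definition monom (q n : nat) (a : {ffun 'I_q.+1 -> 'I_n.+1}) (x : 'rV[R]_q.+1) : R :=
  \prod_i x ord0 i ^+ a i.

Definition polyfun (q n : nat) (c : {ffun 'I_q.+1 -> 'I_n.+1} -> R)
    (x : 'rV[R]_q.+1) : R :=
  \sum_(a : {ffun 'I_q.+1 -> 'I_n.+1} | (\sum_i nat_of_ord (a i) <= n)%N)
     c a * monom a x.

Definition hompolyfun (q k : nat) (c : {ffun 'I_q.+1 -> 'I_k.+1} -> R)
    (x : 'rV[R]_q.+1) : R :=
  \sum_(a : {ffun 'I_q.+1 -> 'I_k.+1} | (\sum_i nat_of_ord (a i) == k)%N)
     c a * monom a x.

Definition in_Pi (q n : nat) (P : 'rV[R]_q.+1 -> R) : Prop :=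
  exists c : {ffun 'I_q.+1 -> 'I_n.+1} -> R,
    forall x, on_sphere x -> P x = polyfun c x.

Definition harmonic (q : nat) (H : 'rV[R]_q.+1 -> R) : Prop :=
  forall x : 'rV[R]_q.+1,
    \sum_(i < q.+1)
      derive (fun z : 'rV[R]_q.+1 => derive H z (delta_mx ord0 i)) x (delta_mx ord0 i) = 0.

Definition sph_harmonic (q k : nat) (Y : 'rV[R]_q.+1 -> R) : Prop :=
  exists c : {ffun 'I_q.+1 -> 'I_k.+1} -> R, harmonic (hompolyfun c) /\
            forall x, on_sphere x -> Y x = hompolyfun c x.

(* y_0, ..., y_N is an orthonormal basis of Pi_n^q w.r.t. mu_q, consisting of
   spherical harmonics, with y_0 = 1 and lower degrees first.
   (Dimension of Pi_n^q is N+1.) *)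
Definition sph_onb (q n N : nat) (y : 'I_N.+1 -> 'rV[R]_q.+1 -> R) : Prop :=
  [/\ forall l, in_Pi n (y l),
      forall l k, sph_int (fun x => y l x * y k x) = (l == k)%:R,
      forall P, in_Pi n P ->
        exists a : 'I_N.+1 -> R, forall x, on_sphere x -> P x = \sum_l a l * y l x,
      forall x, on_sphere x -> y ord0 x = 1 &
      exists deg : 'I_N.+1 -> nat,
        (forall l k : 'I_N.+1, (l <= k)%N -> (deg l <= deg k)%N) /\
        forall l, sph_harmonic (deg l) (y l)].

Definition gram (q N : nat) (C : seq 'rV[R]_q.+1) (v : 'rV[R]_q.+1 -> R)
    (y : 'I_N.+1 -> 'rV[R]_q.+1 -> R) : 'M[R]_N.+1 :=
  \matrix_(l, k) \sum_(xi <- C) v xi * y l xi * y k xi.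

Definition posdef (m : nat) (M : 'M[R]_m) : Prop :=
  forall u : 'rV[R]_m, u != 0 -> 0 < (u *m M *m u^T) ord0 ord0.

Definition wLSQ (q N : nat) (C : seq 'rV[R]_q.+1) (v : 'rV[R]_q.+1 -> R)
    (y : 'I_N.+1 -> 'rV[R]_q.+1 -> R) (xi : 'rV[R]_q.+1) : R :=
  v xi * \sum_k (invmx (gram C v y)) ord0 k * y k xi.

End SphereDefs.

From mathcomp Require Import all_boot all_order all_algebra.
From mathcomp Require Import all_classical all_reals all_analysis.
From mathcomp Require Import measurable_realfun.
From mathcomp Require Import ring lra.
Set Implicit Arguments. Unset Strict Implicit. Unset Printing Implicit Defensive.
Import Order.TTheory GRing.Theory Num.Theory.
Local Open Scope ring_scope.

(* (a) is the minimum-norm property of least squares.  A rule w that is exact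
   on the basis differs from w^LSQ by some d with sum_xi d_xi y_l(xi) = 0 for
   all l, while w^LSQ / v is a linear combination of the y_l; hence the cross
   term vanishes in
     sum w^2/v = sum (w^LSQ)^2/v + 2 sum (w^LSQ/v) d + sum d^2/v.

   (b) Only the lower inequality for p = 1 is needed:
     |int P d mu_q| <= ||P||_1 <= c1^-1 sum_xi v_xi |P(xi)|,
   so P|_C |-> int P d mu_q is a well-defined linear functional on the space
   of restrictions of polynomials to C, dominated by a weighted l^1 norm.
   Hahn-Banach in R^C (extend one coordinate direction at a time, choosing the
   new value as a supremum) yields a functional on all of R^C with the same
   bound, i.e. weights with |W_xi| <= c1^-1 v_xi.  Since mu_q is defined by
   the cone over the sphere in the unit ball, linearity and the L^1 bound of
   int d mu_q on polynomials come from those of the Lebesgue integral of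
   bounded measurable functions on the ball, computed as iterated integrals. *)

Section IteratedIntegral.
Variable R : realType.

Local Notation dR := (sigma_display (R.-ocitv.-measurable)).

Fixpoint Rk_display (k : nat) : measure_display :=
  if k is k'.+1 then (dR, Rk_display k').-prod else dR.

(* [Rk 0] is a copy of R whose point [seq_of_Rk] ignores; any measurable space
   would do, since [iint 0 f = f [::]]. *)
Fixpoint Rk (k : nat) : measurableType (Rk_display k) :=
  if k is k'.+1 then (measurableTypeR R * Rk k')%type else measurableTypeR R.

Fixpoint seq_of_Rk (k : nat) : Rk k -> seq R :=
  if k is k'.+1 then fun z => z.1 :: seq_of_Rk z.2 else fun=> [::].

Lemma iint_ge0 k (f : seq R -> \bar R) :
  (forall s, 0 <= f s)%E -> (0 <= iint k f)%E.
Proof.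
elim: k f => [|k IH] f f0 /=; first exact: f0.
by apply: integral_ge0 => x _; exact: IH.
Qed.

Lemma measurable_fun_iint k d (T : measurableType d) (F : T -> seq R -> \bar R) :
  measurable_fun [set: T * Rk k] (fun p => F p.1 (seq_of_Rk p.2)) ->
  (forall t s, 0 <= F t s)%E ->
  measurable_fun [set: T] (fun t => iint k (F t)).
Proof.
elim: k d T F => [|k IH] d T F mF F0 /=.
  change (measurable_fun [set: T]
    ((fun p : T * Rk 0 => F p.1 (seq_of_Rk p.2)) \o (fun t => (t, 0 : R)))).
  have mpair : measurable_fun [set: T] (fun t => (t, 0 : R) : T * Rk 0).
    by apply: measurable_fun_pair => //; exact: measurable_cst.
  exact: measurableT_comp mF mpair.
pose G (p : T * measurableTypeR R) (s : seq R) := F p.1 (p.2 :: s).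
have mG : measurable_fun [set: T * measurableTypeR R] (fun p => iint k (G p)).
  apply: IH => [|? ?]; last exact: F0.
  change (measurable_fun [set: (T * measurableTypeR R) * Rk k]
    ((fun p : T * Rk k.+1 => F p.1 (seq_of_Rk p.2)) \o (fun r => (r.1.1, (r.1.2, r.2))))).
  apply: (measurableT_comp mF); apply: measurable_fun_pair.
    exact: measurableT_comp measurable_fst measurable_fst.
  apply: measurable_fun_pair; last exact: measurable_snd.
  exact: measurableT_comp measurable_snd measurable_fst.
apply: (@measurable_fun_fubini_tonelli_F _ _ _ _ _ (@lebesgue_measure R) _ mG) => x.
by apply: iint_ge0 => s; exact: F0.
Qed.

Definition measurable_seqfun k (f : seq R -> \bar R) :=
  measurable_fun [set: Rk k] (fun z => f (seq_of_Rk z)).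

Lemma measurable_seqfun_cons k f (x : R) :
  measurable_seqfun k.+1 f -> measurable_seqfun k (fun s => f (x :: s)).
Proof.
move=> mf; rewrite /measurable_seqfun.
have -> : (fun z : Rk k => f (x :: seq_of_Rk z)) =
  (fun z : Rk k.+1 => f (seq_of_Rk z)) \o pair (x : measurableTypeR R) by [].
exact: measurableT_comp.
Qed.

Lemma measurable_iint_cons k f : measurable_seqfun k.+1 f -> (forall s, 0 <= f s)%E ->
  measurable_fun [set: measurableTypeR R] (fun x => iint k (fun s => f (x :: s))).
Proof. by move=> mf f0; apply: (@measurable_fun_iint k _ _ (fun x s => f (x :: s))). Qed.

Lemma iintD k f g : measurable_seqfun k f -> measurable_seqfun k g ->
  (forall s, 0 <= f s)%E -> (forall s, 0 <= g s)%E ->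
  iint k (fun s => f s + g s)%E = (iint k f + iint k g)%E.
Proof.
elim: k f g => [|k IH] f g mf mg f0 g0 //=.
rewrite (eq_integral (fun x : measurableTypeR R =>
  iint k (fun s => f (x :: s)) + iint k (fun s => g (x :: s)))%E); last first.
  by move=> x _; apply: IH => //; exact: measurable_seqfun_cons.
apply: ge0_integralD => //; try exact: measurable_iint_cons.
all: by move=> x _; exact: iint_ge0.
Qed.

Lemma iintZl k (a : R) f : 0 <= a -> measurable_seqfun k f -> (forall s, 0 <= f s)%E ->
  iint k (fun s => a%:E * f s)%E = (a%:E * iint k f)%E.
Proof.
elim: k f => [|k IH] f a0 mf f0 //=.
rewrite (eq_integral (fun x : measurableTypeR R => a%:E * iint k (fun s => f (x :: s)))%E);
  last by move=> x _; apply: IH => //; exact: measurable_seqfun_cons.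
apply: ge0_integralZl => // [|x _]; [exact: measurable_iint_cons | exact: iint_ge0].
Qed.

Lemma le_iint k f g : measurable_seqfun k f -> measurable_seqfun k g ->
  (forall s, 0 <= f s)%E -> (forall s, f s <= g s)%E -> (iint k f <= iint k g)%E.
Proof.
elim: k f g => [|k IH] f g mf mg f0 fg //=.
have g0 s : (0 <= g s)%E by exact: le_trans (fg s).
apply: ge0_le_integral => // [x _|||x _]; try exact: iint_ge0; try exact: measurable_iint_cons.
by apply: IH => //; exact: measurable_seqfun_cons.
Qed.

Lemma iint0 k : iint k (fun _ : seq R => 0%E) = 0%E.
Proof.
elim: k => [|k IH] //=.
by rewrite (eq_integral (cst 0%E)) ?integral0 // => x _; rewrite IH.
Qed.

Definition row_of_Rk k (z : Rk k) : 'rV[R]_k := vec_of k (seq_of_Rk z).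

Definition rmeasurable k (h : 'rV[R]_k -> R) :=
  measurable_fun [set: Rk k] (fun z => h (row_of_Rk z)).

Lemma measurable_nth_seq_of_Rk k i :
  measurable_fun [set: Rk k] (fun z => nth 0 (seq_of_Rk z) i).
Proof.
elim: k i => [|k IH] [|i] /=; try exact: measurable_cst.
  exact: measurable_fst.
exact: measurableT_comp (IH i) measurable_snd.
Qed.

Lemma rmeasurable_coord k (i : 'I_k) : rmeasurable (fun x : 'rV[R]_k => x ord0 i).
Proof.
rewrite /rmeasurable /row_of_Rk /vec_of; under eq_fun do rewrite mxE.
exact: measurable_nth_seq_of_Rk.
Qed.

Lemma rmeasurable_enorm k : rmeasurable (@enorm R k).
Proof.
have -> : @enorm R k = fun x => (\sum_i x ord0 i ^+ 2) `^ 2^-1.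
  apply/funext => x; rewrite powR12_sqrt //.
  by apply: sumr_ge0 => i _; exact: sqr_ge0.
apply: measurableT_comp (measurable_powR _) _.
apply: measurable_sum => i; apply: measurable_funX; exact: rmeasurable_coord.
Qed.

Lemma rmeasurable_inv_enorm k : rmeasurable (fun x : 'rV[R]_k => (enorm x)^-1).
Proof.
have -> : (fun x : 'rV[R]_k => (enorm x)^-1) = fun x => enorm x `^ (-1).
  by apply/funext => x; rewrite powR_inv1 // sqrtr_ge0.
apply: measurableT_comp (measurable_powR _) _; exact: rmeasurable_enorm.
Qed.

Definition rvolint k (h : 'rV[R]_k -> R) : \bar R := volint (fun x => (h x)%:E).

Lemma measurable_seqfun_EFin k (h : 'rV[R]_k -> R) :
  rmeasurable h -> measurable_seqfun k (fun s => (h (vec_of k s))%:E).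
Proof. by move=> mh; apply/measurable_EFinP. Qed.

Lemma rvolint_ge0 k (h : 'rV[R]_k -> R) : (forall x, 0 <= h x) -> (0 <= rvolint h)%E.
Proof. by move=> h0; apply: iint_ge0 => s; rewrite lee_fin. Qed.

Lemma rvolintD k (f g : 'rV[R]_k -> R) : rmeasurable f -> rmeasurable g ->
  (forall x, 0 <= f x) -> (forall x, 0 <= g x) ->
  rvolint (fun x => f x + g x) = (rvolint f + rvolint g)%E.
Proof.
move=> mf mg f0 g0; rewrite /rvolint /volint; under eq_fun do rewrite EFinD.
apply: iintD; try exact: measurable_seqfun_EFin.
all: by move=> s; rewrite lee_fin.
Qed.

Lemma rvolintZl k (a : R) (f : 'rV[R]_k -> R) : 0 <= a -> rmeasurable f ->
  (forall x, 0 <= f x) -> rvolint (fun x => a * f x) = (a%:E * rvolint f)%E.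
Proof.
move=> a0 mf f0; rewrite /rvolint /volint; under eq_fun do rewrite EFinM.
apply: iintZl => //; first exact: measurable_seqfun_EFin.
by move=> s; rewrite lee_fin.
Qed.

Lemma rvolint0 k : rvolint (fun _ : 'rV[R]_k => 0) = 0%E.
Proof. exact: iint0. Qed.

Lemma le_rvolint k (f g : 'rV[R]_k -> R) : rmeasurable f -> rmeasurable g ->
  (forall x, 0 <= f x) -> (forall x, f x <= g x) -> (rvolint f <= rvolint g)%E.
Proof.
move=> mf mg f0 fg; apply: le_iint; try exact: measurable_seqfun_EFin.
all: by move=> s; rewrite lee_fin.
Qed.

End IteratedIntegral.

Section SphereIntegral.
Variables (R : realType) (q : nat).
Local Notation k := q.+1.
Implicit Types f g h : 'rV[R]_k -> R.

Definition ballr (x : 'rV[R]_k) : R := ((enorm x <= 1)%R)%:R.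

Definition unit_ball_vol : \bar R := volint (@ball_ind R q).

Lemma unit_ball_volE : unit_ball_vol = rvolint ballr.
Proof.
by congr volint; apply/funext => x; rewrite /ball_ind /ballr; case: ifP.
Qed.

Lemma unit_ball_vol_ge0 : (0 <= unit_ball_vol)%E.
Proof. by rewrite unit_ball_volE; apply: rvolint_ge0 => x; exact: ler0n. Qed.

Lemma rmeasurable_ballr : rmeasurable ballr.
Proof.
have -> : ballr = fun x => if enorm x <= 1 then 1 else 0.
  by apply/funext => x; rewrite /ballr; case: ifP.
apply: measurable_fun_ifT; try exact: measurable_cst.
by apply: measurable_fun_ler; [exact: rmeasurable_enorm | exact: measurable_cst].
Qed.

Definition ball_bounded (h : 'rV[R]_k -> R) :=
  rmeasurable h /\ exists2 M, 0 <= M & forall x, `|h x| <= M * ballr x.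

Lemma rvolint_fin_num (g : 'rV[R]_k -> R) M : (unit_ball_vol < +oo)%E ->
  rmeasurable g -> 0 <= M -> (forall x, 0 <= g x) -> (forall x, g x <= M * ballr x) ->
  rvolint g \is a fin_num.
Proof.
move=> volfin mg M0 g0 gM; rewrite ge0_fin_numE ?rvolint_ge0 //.
have mMb : rmeasurable (fun x => M * ballr x).
  exact: measurable_funM (measurable_cst _) rmeasurable_ballr.
apply: le_lt_trans (le_rvolint mg mMb g0 gM) _.
rewrite rvolintZl //; last exact: rmeasurable_ballr.
by rewrite -unit_ball_volE lte_mul_pinfty.
Qed.

Lemma ball_bounded_fin_num h : (unit_ball_vol < +oo)%E -> ball_bounded h ->
  rvolint h^\+ \is a fin_num /\ rvolint h^\- \is a fin_num.
Proof.
move=> volfin [mh [M M0 hM]]; split; apply: (rvolint_fin_num volfin _ M0) => // x.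
- exact: measurable_funrpos.
- apply: le_trans (hM x); rewrite /funrpos ge_max normr_ge0 andbT; exact: ler_norm.
- exact: measurable_funrneg.
- apply: le_trans (hM x); rewrite /funrneg ge_max normr_ge0 andbT -normrN; exact: ler_norm.
Qed.

Lemma ball_boundedD f g : ball_bounded f -> ball_bounded g ->
  ball_bounded (fun x => f x + g x).
Proof.
move=> [mf [M M0 fM]] [mg [N N0 gN]]; split; first exact: measurable_funD.
exists (M + N) => [|x]; first exact: addr_ge0.
by apply: le_trans (ler_normD _ _) _; rewrite mulrDl lerD.
Qed.

Lemma ball_boundedZ (a : R) h : ball_bounded h -> ball_bounded (fun x => a * h x).
Proof.
move=> [mh [M M0 hM]]; split; first exact: measurable_funM (measurable_cst _) mh.
exists (`|a| * M) => [|x]; first exact: mulr_ge0.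
by rewrite normrM -mulrA ler_wpM2l.
Qed.

Lemma fineMr (x : \bar R) (a : R) : fine (x * a%:E)%E = fine x * a.
Proof.
case: x => [r| |] //=; rewrite ?mulyr ?mulNyr;
  by case: sgrP => _; rewrite ?mul0e ?mul1e ?mulN1e //= mul0r.
Qed.

Lemma fineMl (a : R) (x : \bar R) : fine (a%:E * x)%E = a * fine x.
Proof. by rewrite muleC fineMr mulrC. Qed.

Definition svolint (h : 'rV[R]_k -> R) : R :=
  fine (rvolint h^\+) - fine (rvolint h^\-).

Lemma svolintD f g : (unit_ball_vol < +oo)%E -> ball_bounded f -> ball_bounded g ->
  svolint (fun x => f x + g x) = svolint f + svolint g.
Proof.
move=> volfin bf bg; set fg := fun x => f x + g x.
have bfg : ball_bounded fg by exact: ball_boundedD.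
have [mf _] := bf; have [mg _] := bg; have [mfg _] := bfg.
have mpos (h : 'rV[R]_k -> R) : rmeasurable h -> rmeasurable h^\+.
  exact: measurable_funrpos.
have mneg (h : 'rV[R]_k -> R) : rmeasurable h -> rmeasurable h^\-.
  exact: measurable_funrneg.
(* integrate [fg^+ + f^- + g^- = fg^- + f^+ + g^+], avoiding subtraction in \bar R *)
have E : (rvolint (fg^\+)%R + rvolint (f^\-)%R + rvolint (g^\-)%R =
          rvolint (fg^\-)%R + rvolint (f^\+)%R + rvolint (g^\+)%R)%E.
  rewrite -!rvolintD //.
  all: try (move=> x; exact: addr_ge0).
  all: try by (apply: measurable_funD || idtac); first [apply: mneg | apply: mpos].
  congr rvolint; apply/funext => x.
  have := congr1 (@^~ x) (funrposBneg fg); have := congr1 (@^~ x) (funrposBneg f).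
  have := congr1 (@^~ x) (funrposBneg g); rewrite /fg /= !fctE; lra.
have [pf nf] := ball_bounded_fin_num volfin bf.
have [pg ng] := ball_bounded_fin_num volfin bg.
have [pfg nfg] := ball_bounded_fin_num volfin bfg.
move: E; rewrite -(fineK pf) -(fineK nf) -(fineK pg) -(fineK ng) -(fineK pfg) -(fineK nfg).
by rewrite -!EFinD => -[E]; rewrite /svolint; lra.
Qed.

Lemma svolintZl (a : R) h : rmeasurable h ->
  svolint (fun x => a * h x) = a * svolint h.
Proof.
move=> mh; have mpos := measurable_funrpos mh; have mneg := measurable_funrneg mh.
rewrite /svolint; have [a0|/ltW a0] := leP 0 a.
  rewrite ge0_funrposM // ge0_funrnegM // !rvolintZl //.
  by rewrite !fineMl mulrBr.
rewrite le0_funrposM // le0_funrnegM // !rvolintZl ?oppr_ge0 //.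
rewrite !fineMl; ring.
Qed.

Lemma normr_svolint_le h : (unit_ball_vol < +oo)%E -> ball_bounded h ->
  `|svolint h| <= fine (rvolint (fun x => `|h x|)).
Proof.
move=> volfin bh; have [mh _] := bh; have [ph nh] := ball_bounded_fin_num volfin bh.
have -> : (fun x => `|h x|) = fun x => h^\+ x + h^\- x.
  by apply/funext => x; have := congr1 (@^~ x) (funrposDneg h).
rewrite rvolintD; try exact: measurable_funrpos; try exact: measurable_funrneg; try by [].
rewrite fineD //; apply: le_trans (ler_normB _ _) _.
by rewrite !ger0_norm //; apply: fine_ge0; exact: rvolint_ge0.
Qed.

Definition cone (f : 'rV[R]_k -> R) (x : 'rV[R]_k) : R :=
  if (0 < enorm x) && (enorm x <= 1) then f ((enorm x)^-1 *: x) else 0.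

Lemma cone_add f g : cone (fun x => f x + g x) = fun x => cone f x + cone g x.
Proof. by apply/funext => x; rewrite /cone; case: ifP; rewrite ?addr0. Qed.

Lemma cone_scale (a : R) f : cone (fun x => a * f x) = fun x => a * cone f x.
Proof. by apply/funext => x; rewrite /cone; case: ifP; rewrite ?mulr0. Qed.

Lemma enormZ (a : R) (x : 'rV[R]_k) : enorm (a *: x) = `|a| * enorm x.
Proof.
rewrite /enorm -sqrtr_sqr -sqrtrM ?sqr_ge0 // mulr_sumr.
by congr Num.sqrt; apply: eq_bigr => i _; rewrite mxE exprMn.
Qed.

Lemma on_sphere_normalize (x : 'rV[R]_k) : 0 < enorm x -> on_sphere ((enorm x)^-1 *: x).
Proof.
move=> x0; rewrite /on_sphere enormZ ger0_norm ?invr_ge0 ?ltW //.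
by rewrite mulVf // gt_eqF.
Qed.

Lemma normr_coord_le1 (y : 'rV[R]_k) i : on_sphere y -> `|y ord0 i| <= 1.
Proof.
rewrite /on_sphere /enorm => y1; rewrite -y1 -sqrtr_sqr ler_sqrt; last first.
  by apply: sumr_ge0 => j _; exact: sqr_ge0.
by rewrite (bigD1 i) //= lerDl; apply: sumr_ge0 => j _; exact: sqr_ge0.
Qed.

Lemma eq_cone f g : (forall x, on_sphere x -> f x = g x) -> cone f = cone g.
Proof.
move=> fg; apply/funext => x; rewrite /cone; case: ifP => // /andP[x0 _].
by rewrite fg //; exact: on_sphere_normalize.
Qed.

(* The finiteness of the volume of the ball is never proved: were it infinite,
   [fine unit_ball_vol] and its inverse would be 0 and the identities below
   would hold trivially. *)
Lemma sph_intE f : sph_int f = (fine unit_ball_vol)^-1 * svolint (cone f).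
Proof.
rewrite /sph_int /sph_int_nn !fineMr -/unit_ball_vol mulrBr ![_^-1 * _]mulrC.
by congr (fine _ * _ - fine _ * _); rewrite /rvolint;
  congr volint; apply/funext => x; rewrite /cone_ext /cone /funrpos /funrneg;
  case: ifP; rewrite // ?oppr0 maxxx.
Qed.

Lemma eq_sph_int f g : (forall x, on_sphere x -> f x = g x) -> sph_int f = sph_int g.
Proof. by move=> fg; rewrite !sph_intE (eq_cone fg). Qed.

Lemma sph_intD f g : ball_bounded (cone f) -> ball_bounded (cone g) ->
  sph_int (fun x => f x + g x) = sph_int f + sph_int g.
Proof.
move=> bf bg; rewrite !sph_intE -mulrDr.
have [volfin|] := boolP (unit_ball_vol < +oo)%E; last first.
  by rewrite ltey negbK => /eqP ->; rewrite /= invr0 !mul0r.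
by rewrite cone_add svolintD.
Qed.

Lemma sph_intZl (a : R) f : rmeasurable (cone f) ->
  sph_int (fun x => a * f x) = a * sph_int f.
Proof.
by move=> mf; rewrite !sph_intE cone_scale svolintZl // mulrCA.
Qed.

Lemma sph_int_abs f :
  sph_int (fun x => `|f x| `^ 1) = (fine unit_ball_vol)^-1 * fine (rvolint (fun x => `|cone f x|)).
Proof.
rewrite sph_intE; have -> : cone (fun x => `|f x| `^ 1) = fun x => `|cone f x|.
  by apply/funext => x; rewrite /cone; case: ifP; rewrite ?normr0 // powRr1.
rewrite /svolint.
have -> : (fun x => `|cone f x|)^\+ = fun x => `|cone f x|.
  by apply/funext => x; rewrite /funrpos max_l.
have -> : (fun x => `|cone f x|)^\- = fun=> 0.
  by apply/funext => x; rewrite /funrneg max_r // oppr_le0.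
by rewrite rvolint0 subr0.
Qed.

Lemma normr_sph_int_le_L1 f : ball_bounded (cone f) -> `|sph_int f| <= Lpnorm 1%:E f.
Proof.
move=> bf; have K0 : 0 <= (fine unit_ball_vol)^-1.
  by rewrite invr_ge0 fine_ge0 ?unit_ball_vol_ge0.
have I0 : 0 <= fine (rvolint (fun x => `|cone f x|)).
  by apply: fine_ge0; apply: rvolint_ge0.
rewrite /Lpnorm invr1 powRr1 sph_int_abs; last exact: mulr_ge0.
have [volfin|] := boolP (unit_ball_vol < +oo)%E; last first.
  by rewrite ltey negbK => /eqP volinf; rewrite sph_intE volinf /= invr0 !mul0r normr0.
by rewrite sph_intE normrM ger0_norm // ler_wpM2l // normr_svolint_le.
Qed.

End SphereIntegral.

Section PolynomialIntegral.
Variables (R : realType) (q n : nat).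
Local Notation k := q.+1.
Local Notation coef := ({ffun 'I_k -> 'I_n.+1} -> R).
Implicit Types c d : coef.

Lemma polyfunDZ (a : R) c d x : polyfun (a *: c + d) x = a * polyfun c x + polyfun d x.
Proof.
by rewrite /polyfun mulr_sumr -big_split; apply: eq_bigr => e _ /=; rewrite mulrDl mulrA.
Qed.

Lemma normr_polyfun_le c y : on_sphere y -> `|polyfun c y| <= \sum_e `|c e|.
Proof.
move=> y1; apply: le_trans (ler_norm_sum _ _ _) _.
have sub_le : \sum_(e : {ffun 'I_k -> 'I_n.+1} | (\sum_i nat_of_ord (e i) <= n)%N) `|c e|
    <= \sum_e `|c e|.
  rewrite [leRHS](bigID (fun e : {ffun 'I_k -> 'I_n.+1} => (\sum_i nat_of_ord (e i) <= n)%N)).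
  by rewrite lerDl; apply: sumr_ge0 => e _.
apply: le_trans sub_le; apply: ler_sum => e _; rewrite normrM -[leRHS]mulr1 ler_wpM2l //.
rewrite /monom normr_prod; apply: prodr_ile1 => i _.
by rewrite normr_ge0 normrX exprn_ile1 ?normr_ge0 ?normr_coord_le1.
Qed.

Lemma rmeasurable_cone_polyfun c : rmeasurable (cone (polyfun c)).
Proof.
have -> : cone (polyfun c) = fun x => if (0 < enorm x) && (enorm x <= 1) then
    \sum_(e : {ffun 'I_k -> 'I_n.+1}) (if (\sum_i nat_of_ord (e i) <= n)%N then
      c e * \prod_i ((enorm x)^-1 * x ord0 i) ^+ e i else 0) else 0.
  apply/funext => x; rewrite /cone; case: ifP => // _.
  rewrite /polyfun big_mkcond; apply: eq_bigr => e _; case: ifP => // _.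
  by congr (_ * _); apply: eq_bigr => i _; rewrite mxE.
apply: measurable_fun_ifT; last exact: measurable_cst.
  apply: measurable_and.
    by apply: measurable_fun_ltr; [exact: measurable_cst | exact: rmeasurable_enorm].
  by apply: measurable_fun_ler; [exact: rmeasurable_enorm | exact: measurable_cst].
apply: measurable_sum => e; case: (_ <= n)%N; last exact: measurable_cst.
apply: measurable_funM; first exact: measurable_cst.
apply: measurable_prod => i _; apply: measurable_funX.
by apply: measurable_funM; [exact: rmeasurable_inv_enorm | exact: rmeasurable_coord].
Qed.

Lemma ball_bounded_cone_polyfun c : ball_bounded (cone (polyfun c)).
Proof.
split; first exact: rmeasurable_cone_polyfun.
exists (\sum_e `|c e|) => [|x]; first exact: sumr_ge0.
rewrite /cone /ballr; case: ifP => [/andP[x0 ->]|_]; rewrite ?mulr1.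
  exact/normr_polyfun_le/on_sphere_normalize.
by rewrite normr0 mulr_ge0 // sumr_ge0.
Qed.

Lemma sph_int_polyfunDZ (a : R) c d :
  sph_int (polyfun (a *: c + d)) = a * sph_int (polyfun c) + sph_int (polyfun d).
Proof.
rewrite (_ : polyfun _ = fun x => a * polyfun c x + polyfun d x); last first.
  by apply/funext => x; exact: polyfunDZ.
rewrite sph_intD ?sph_intZl ?cone_scale //; first exact: rmeasurable_cone_polyfun.
  exact/ball_boundedZ/ball_bounded_cone_polyfun.
exact: ball_bounded_cone_polyfun.
Qed.

End PolynomialIntegral.

Section FiniteHahnBanach.
Variables (R : realType) (m : nat) (u : 'I_m -> R).
Hypothesis u_ge0 : forall i, 0 <= u i.
Implicit Types (f g h : 'rV[R]_m) (V : set 'rV[R]_m) (L : 'rV[R]_m -> R).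

Definition wl1 f := \sum_i u i * `|f ord0 i|.

Lemma wl1D f g : wl1 (f + g) <= wl1 f + wl1 g.
Proof.
rewrite /wl1 -big_split /=; apply: ler_sum => i _.
by rewrite mxE -mulrDr ler_wpM2l // ler_normD.
Qed.

Lemma wl1Z t f : wl1 (t *: f) = `|t| * wl1 f.
Proof. by rewrite /wl1 mulr_sumr; apply: eq_bigr => i _; rewrite mxE normrM mulrCA. Qed.

Lemma wl1N f : wl1 (- f) = wl1 f.
Proof. by rewrite -scaleN1r wl1Z normrN normr1 mul1r. Qed.

Definition subspace V :=
  [/\ V 0, forall f g, V f -> V g -> V (f + g) & forall t f, V f -> V (t *: f)].

Definition dominated V L :=
  [/\ subspace V, forall f g, V f -> V g -> L (f + g) = L f + L g,
      forall t f, V f -> L (t *: f) = t * L f & forall f, V f -> L f <= wl1 f].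

Lemma dominated_separating_value V L g : dominated V L ->
  exists a, forall h, V h -> L h - wl1 (h - g) <= a /\ a <= wl1 (h + g) - L h.
Proof.
case=> [[V0 VD _] LD _ Lwl1].
have sep h1 h2 : V h1 -> V h2 -> L h1 - wl1 (h1 - g) <= wl1 (h2 + g) - L h2.
  move=> V1 V2; have := Lwl1 _ (VD _ _ V1 V2); rewrite LD //.
  have := wl1D (h1 - g) (h2 + g); rewrite addrACA addNr addr0; lra.
pose S := [set x | exists2 h, V h & L h - wl1 (h - g) = x]%classic.
have S0 : S (L 0 - wl1 (0 - g)) by exists 0.
exists (sup S) => h Vh; split.
  apply: sup_upper_bound; last by exists h.
  by split; [exists (L 0 - wl1 (0 - g)) | exists (wl1 (0 + g) - L 0) => _ [h' ? <-]; exact: sep].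
by apply: ge_sup; [exists (L 0 - wl1 (0 - g)) | move=> _ [h' ? <-]; exact: sep].
Qed.

Lemma dominated_separating_bound V L g a h t : dominated V L ->
  (forall h, V h -> L h - wl1 (h - g) <= a /\ a <= wl1 (h + g) - L h) ->
  V h -> L h + t * a <= wl1 (h + t *: g).
Proof.
case=> [[_ _ VZ] _ LZ Lwl1] ha Vh.
have [->|t0] := eqVneq t 0; first by rewrite mul0r addr0 scale0r addr0 Lwl1.
have ht : h + t *: g = t *: (t^-1 *: h + g) by rewrite scalerDr scalerA mulfV // scale1r.
have Lh : L h = t * L (t^-1 *: h) by rewrite LZ // mulrA mulfV // mul1r.
have Vh' := VZ t^-1 _ Vh; set h' := t^-1 *: h in Vh' Lh *.
rewrite ht wl1Z Lh; move: t0; rewrite neq_lt => /orP[t_lt0|t_gt0].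
  have [+ _] := ha _ (VZ (-1) _ Vh'); rewrite LZ // !scaleN1r -opprD wl1N ltr0_norm //.
  nra.
have [_ +] := ha _ Vh'; rewrite gtr0_norm //; nra.
Qed.

Lemma subspace_decompose_uniq V g h1 h2 t1 t2 : subspace V -> ~ V g -> V h1 -> V h2 ->
  h1 + t1 *: g = h2 + t2 *: g -> t1 = t2 /\ h1 = h2.
Proof.
move=> [_ VD VZ] Vg V1 V2 E.
have [t12|t12] := eqVneq t1 t2; first by subst t2; split => //; move/addIr: E.
exfalso; apply: Vg.
have -> : g = (t1 - t2)^-1 *: (h2 - h1).
  apply: (scalerI (a := t1 - t2)); first by rewrite subr_eq0.
  rewrite scalerA mulfV ?subr_eq0 // scale1r scalerBl.
  by apply/eqP; rewrite subr_eq addrAC -E addrAC subrr add0r.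
by apply: (VZ); apply: VD => //; rewrite -scaleN1r; exact: VZ.
Qed.

Lemma dominated_extend1 V L g : dominated V L ->
  exists V' L', [/\ dominated V' L', (forall f, V f -> V' f /\ L' f = L f) & V' g].
Proof.
move=> VL; have [[V0 VD VZ] LD LZ _] := VL.
have [Vg|Vg] := pselect (V g); first by exists V, L.
have [a ha] := dominated_separating_value g VL.
pose V' f := exists p : 'rV[R]_m * R, V p.1 /\ f = p.1 + p.2 *: g.
pose L' f := if pselect (V' f) is left H then
  let p := projT1 (cid H) in L p.1 + p.2 * a else 0.
have L'E h t : V h -> L' (h + t *: g) = L h + t * a.
  move=> Vh; rewrite /L'; case: pselect => [H|[]]; last by exists (h, t).
  case: (cid H) => [[h' t']] /= [Vh' E].
  by have [-> ->] := subspace_decompose_uniq (And3 V0 VD VZ) Vg Vh Vh' E.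
exists V', L'; split; last by exists (0, 1); rewrite /= scale1r add0r.
  split.
  - split; first by exists (0, 0); rewrite /= scale0r addr0.
      move=> _ _ [[h1 t1] /= [V1 ->]] [[h2 t2] /= [V2 ->]].
      by exists (h1 + h2, t1 + t2); rewrite /= scalerDl addrACA; split => //; exact: VD.
    move=> s _ [[h t] /= [Vh ->]]; exists (s *: h, s * t).
    by rewrite /= scalerDr scalerA; split => //; exact: VZ.
  - move=> _ _ [[h1 t1] /= [V1 ->]] [[h2 t2] /= [V2 ->]].
    by rewrite addrACA -scalerDl !L'E ?LD //; [ring | exact: VD].
  - move=> s _ [[h t] /= [Vh ->]].
    by rewrite scalerDr scalerA !L'E ?LZ //; [ring | exact: VZ].
  - move=> _ [[h t] /= [Vh ->]]; rewrite L'E //.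
    exact: dominated_separating_bound VL ha Vh.
move=> f Vf; split; first by exists (f, 0); rewrite /= scale0r addr0.
by have := L'E f 0 Vf; rewrite scale0r addr0 mul0r addr0.
Qed.

Lemma dominated_extend_deltas V L j : (j <= m)%N -> dominated V L ->
  exists V' L', [/\ dominated V' L', (forall f, V f -> V' f /\ L' f = L f) &
    forall i : 'I_m, (i < j)%N -> V' (delta_mx 0 i)].
Proof.
elim: j => [|j IH] jm VL; first by exists V, L.
have [V1 [L1 [VL1 ext1 D1]]] := IH (ltnW jm) VL.
have [V2 [L2 [VL2 ext2 D2]]] := dominated_extend1 (delta_mx 0 (Ordinal jm)) VL1.
exists V2, L2; split => // [f Vf|i].
  by have [V1f <-] := ext1 f Vf; exact: ext2.
rewrite ltnS leq_eqVlt => /orP[/eqP ij|ij]; last by have [] := ext2 _ (D1 i ij).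
by have -> : i = Ordinal jm by apply: val_inj.
Qed.

Lemma finite_hahn_banach V L : dominated V L -> exists W : 'I_m -> R,
  (forall i, `|W i| <= u i) /\ (forall f, V f -> L f = \sum_i W i * f ord0 i).
Proof.
move=> VL; have [V' [L' [VL' ext D]]] := dominated_extend_deltas (leqnn m) VL.
have [[V0 VD VZ] LD LZ Lwl1] := VL'.
have De i : V' (delta_mx 0 i) by apply: D; exact: ltn_ord.
exists (fun i => L' (delta_mx 0 i)); split => [i|f Vf].
  have wl1_delta : wl1 (delta_mx 0 i) = u i.
    rewrite /wl1 (bigD1 i) //= mxE !eqxx normr1 mulr1 big1 ?addr0 // => j /negPf ji.
    by rewrite mxE eq_sym ji andbF normr0 mulr0.
  rewrite ler_norml -wl1_delta Lwl1 // andbT.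
  by have := Lwl1 _ (VZ (-1) _ (De i)); rewrite LZ // scaleN1r wl1N; lra.
have sum_deltas (s : seq 'I_m) :
    V' (\sum_(i <- s) f ord0 i *: delta_mx 0 i) /\
    L' (\sum_(i <- s) f ord0 i *: delta_mx 0 i) = \sum_(i <- s) L' (delta_mx 0 i) * f ord0 i.
  elim: s => [|i s [IHV IHL]]; rewrite ?big_nil ?big_cons.
    by split => //; have := LZ 0 0 V0; rewrite scale0r mul0r.
  have Vi := VZ (f ord0 i) _ (De i).
  by split; [exact: VD | rewrite LD // LZ // IHL mulrC].
have [_ <-] := ext f Vf; rewrite [f in L' f]row_sum_delta.
by have [_ ->] := sum_deltas (index_enum _).
Qed.

Lemma dominated_linear_weights (X : lmodType R) (E : X -> 'rV[R]_m) (Lam : X -> R) :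
  (forall a x y, E (a *: x + y) = a *: E x + E y) ->
  (forall a x y, Lam (a *: x + y) = a * Lam x + Lam y) ->
  (forall x, Lam x <= wl1 (E x)) ->
  exists W : 'I_m -> R, (forall i, `|W i| <= u i) /\ (forall x, Lam x = \sum_i W i * E x ord0 i).
Proof.
move=> ElinZD LlinZD Lwl1.
have E0 : E 0 = 0.
  have := ElinZD 1 0 0; rewrite scale1r !addr0 scale1r.
  by move/(congr1 (fun v => v - E 0)); rewrite subrr addrK.
have L0 : Lam 0 = 0.
  have := LlinZD 1 0 0; rewrite scale1r !addr0 mul1r; lra.
have ED x y : E (x + y) = E x + E y by have := ElinZD 1 x y; rewrite !scale1r.
have EZ a x : E (a *: x) = a *: E x by have := ElinZD a x 0; rewrite E0 !addr0.
have LD x y : Lam (x + y) = Lam x + Lam y by have := LlinZD 1 x y; rewrite scale1r mul1r.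
have LZ a x : Lam (a *: x) = a * Lam x by have := LlinZD a x 0; rewrite L0 !addr0.
have Lam_le x y : E x = E y -> Lam x <= Lam y.
  move=> Exy; have := Lwl1 (x - y).
  rewrite -scaleN1r ED EZ LD LZ Exy scaleN1r subrr.
  rewrite -(scale0r (0 : 'rV[R]_m)) wl1Z normr0 mul0r; lra.
pose V := [set f | exists x, E x = f]%classic.
pose L f := if pselect (V f) is left H then Lam (projT1 (cid H)) else 0.
have LE x : L (E x) = Lam x.
  rewrite /L; case: pselect => [H|[]]; last by exists x.
  case: (cid H) => y /= Eyx; apply/eqP; rewrite eq_le.
  by rewrite !Lam_le.
have VL : dominated V L.
  split.
  - split; first by exists 0.
      by move=> _ _ [x <-] [y <-]; exists (x + y); exact: ED.
    by move=> t _ [x <-]; exists (t *: x); exact: EZ.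
  - by move=> _ _ [x <-] [y <-]; rewrite -ED !LE LD.
  - by move=> t _ [x <-]; rewrite -EZ !LE LZ.
  - by move=> _ [x <-]; rewrite LE.
have [W [Wu WL]] := finite_hahn_banach VL.
by exists W; split => // x; rewrite -LE WL //; exists x.
Qed.

End FiniteHahnBanach.

Lemma posdef_unitmx (R : realType) m (M : 'M[R]_m) : posdef M -> M \in unitmx.
Proof.
move=> pd; rewrite unitmxE unitfE; apply/negP => /det0P [x x0 xM].
by have := pd x x0; rewrite xM mul0mx mxE ltxx.
Qed.

Section LeastSquaresWeights.
Variables (R : realType) (q N : nat) (C : seq 'rV[R]_q.+1) (v : 'rV[R]_q.+1 -> R).
Variable y : 'I_N.+1 -> 'rV[R]_q.+1 -> R.
Local Notation G := (gram C v y).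

Definition exact_on_basis (w : 'rV[R]_q.+1 -> R) :=
  forall l : 'I_N.+1, \sum_(xi <- C) w xi * y l xi = (l == ord0)%:R.

Definition wLSQ_density xi := \sum_k (invmx G) ord0 k * y k xi.

Lemma sum_wLSQ_density_mul w : exact_on_basis w ->
  \sum_(xi <- C) wLSQ_density xi * w xi = invmx G ord0 ord0.
Proof.
move=> ew; under eq_bigr do rewrite /wLSQ_density big_distrl /=.
rewrite exchange_big /=.
have inner k : \sum_(xi <- C) invmx G ord0 k * y k xi * w xi = invmx G ord0 k * (k == ord0)%:R.
  by rewrite -ew mulr_sumr; apply: eq_bigr => xi _; rewrite -mulrA [y k xi * _]mulrC.
under eq_bigr do rewrite inner.
by rewrite (bigD1 ord0) //= mulr1 big1 ?addr0 // => k /negPf ->; rewrite mulr0.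
Qed.

Lemma wLSQ_exact : G \in unitmx -> exact_on_basis (wLSQ C v y).
Proof.
move=> Gu l; transitivity ((invmx G *m G) ord0 l); last by rewrite mulVmx // mxE eq_sym.
rewrite mxE; under eq_bigr do rewrite /wLSQ mulr_sumr big_distrl /=.
rewrite exchange_big /=; apply: eq_bigr => k _.
rewrite mxE big_distrr /=; apply: eq_bigr => xi _; ring.
Qed.

Lemma wLSQ_min_energy w : (forall xi, xi \in C -> 0 < v xi) -> G \in unitmx ->
  exact_on_basis w ->
  \sum_(xi <- C) wLSQ C v y xi ^+ 2 / v xi <= \sum_(xi <- C) w xi ^+ 2 / v xi.
Proof.
move=> v_gt0 Gu ew; set d := fun xi => w xi - wLSQ C v y xi.
have cross0 : \sum_(xi <- C) wLSQ_density xi * d xi = 0.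
  under eq_bigr do rewrite mulrBr.
  by rewrite big_split /= sumrN !sum_wLSQ_density_mul ?subrr //; exact: wLSQ_exact.
have -> : \sum_(xi <- C) w xi ^+ 2 / v xi = \sum_(xi <- C) wLSQ C v y xi ^+ 2 / v xi
    + 2 * \sum_(xi <- C) wLSQ_density xi * d xi + \sum_(xi <- C) d xi ^+ 2 / v xi.
  rewrite mulr_sumr -!big_split /= big_seq [RHS]big_seq; apply: eq_bigr => xi xiC.
  have v0 : v xi != 0 by rewrite gt_eqF ?v_gt0.
  by rewrite /d /wLSQ -/(wLSQ_density xi); field.
rewrite cross0 mulr0 addr0 lerDl big_seq sumr_ge0 // => xi xiC.
by rewrite divr_ge0 ?sqr_ge0 // ltW ?v_gt0.
Qed.

End LeastSquaresWeights.

Lemma dnorm1 (R : realType) q (C : seq 'rV[R]_q.+1) (v : 'rV[R]_q.+1 -> R) f :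
  (forall xi, xi \in C -> 0 <= v xi) ->
  dnorm C v 1%:E f = \sum_(xi <- C) v xi * `|f xi|.
Proof.
move=> v_ge0; rewrite /dnorm invr1 powRr1; last first.
  by rewrite big_seq sumr_ge0 // => xi xiC; rewrite mulr_ge0 ?v_ge0 ?powR_ge0.
by apply: eq_bigr => xi _; rewrite powRr1.
Qed.

Lemma exists_bounded_quadrature (R : realType) q n (C : seq 'rV[R]_q.+1)
    (v : 'rV[R]_q.+1 -> R) (c1 : R) :
  uniq C -> (forall xi, xi \in C -> on_sphere xi) -> (forall xi, xi \in C -> 0 < v xi) ->
  0 < c1 -> (forall P, in_Pi n P -> c1 * Lpnorm 1%:E P <= dnorm C v 1%:E P) ->
  exists W : 'rV[R]_q.+1 -> R,
    (forall xi, xi \in C -> `|W xi| <= c1^-1 * v xi) /\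
    (forall P, in_Pi n P -> \sum_(xi <- C) W xi * P xi = sph_int P).
Proof.
move=> uC C_sph v_gt0 c1_gt0 MZ.
pose m := size C; pose u (i : 'I_m) := c1^-1 * v (nth 0 C i).
have u_ge0 i : 0 <= u i by rewrite mulr_ge0 ?invr_ge0 ?ltW ?v_gt0 ?mem_nth.
pose E (c : {ffun 'I_q.+1 -> 'I_n.+1} -> R) := \row_(i < m) polyfun c (nth 0 C i).
have [W' [W'u W'E]] : exists W' : 'I_m -> R, (forall i, `|W' i| <= u i) /\
    forall c, sph_int (polyfun c) = \sum_i W' i * E c ord0 i.
  apply: dominated_linear_weights => //.
  - by move=> a c d; apply/rowP => i; rewrite !mxE polyfunDZ.
  - exact: sph_int_polyfunDZ.
  - move=> c; apply: le_trans (ler_norm _) _.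
    apply: le_trans (normr_sph_int_le_L1 (ball_bounded_cone_polyfun c)) _.
    have -> : wl1 u (E c) = c1^-1 * dnorm C v 1%:E (polyfun c).
      rewrite dnorm1 => [|xi xiC]; last exact/ltW/v_gt0.
      rewrite /wl1 (big_nth 0) big_mkord mulr_sumr; apply: eq_bigr => i _.
      by rewrite /u mxE mulrA.
    by rewrite ler_pdivlMl //; apply: MZ; exists c.
pose W xi := oapp W' 0 (insub (index xi C) : option 'I_m).
have WE (i : 'I_m) : W (nth 0 C i) = W' i.
  by rewrite /W index_uniq // valK.
exists W; split => [xi xiC|P [c Pc]].
  have xi_idx : (index xi C < m)%N by rewrite index_mem.
  by rewrite -(nth_index 0 xiC) -[index _ _]/(val (Ordinal xi_idx)) WE W'u.
rewrite (eq_sph_int (g := polyfun c)) // W'E (big_nth 0) big_mkord.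
by apply: eq_bigr => i _; rewrite WE mxE Pc //; exact/C_sph/mem_nth.
Qed.

Theorem lemma6p1 (R : realType) :
  (* (a) *)
  (forall (q n N : nat) (C : seq 'rV[R]_q.+1) (v : 'rV[R]_q.+1 -> R)
          (y : 'I_N.+1 -> 'rV[R]_q.+1 -> R),
     (1 <= q)%N -> (1 <= n)%N ->
     uniq C -> (forall xi, xi \in C -> on_sphere xi) ->
     (forall xi, xi \in C -> 0 < v xi) ->
     sph_onb n y ->
     posdef (gram C v y) ->
     (forall l : 'I_N.+1,
        \sum_(xi <- C) wLSQ C v y xi * y l xi = (l == ord0)%:R) /\
     (forall w : 'rV[R]_q.+1 -> R,
        (forall l : 'I_N.+1, \sum_(xi <- C) w xi * y l xi = (l == ord0)%:R) ->
        \sum_(xi <- C) (wLSQ C v y xi) ^+ 2 / v xi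
          <= \sum_(xi <- C) (w xi) ^+ 2 / v xi)) /\
  (* (b) *)
  (exists c : R -> R,
   forall (q n : nat) (C : seq 'rV[R]_q.+1) (v : 'rV[R]_q.+1 -> R) (c1 c2 : R),
     (1 <= q)%N -> (1 <= n)%N ->
     uniq C -> (forall xi, xi \in C -> on_sphere xi) ->
     (forall xi, xi \in C -> 0 < v xi) ->
     0 < c1 -> 0 < c2 ->
     (forall (p : \bar R) (P : 'rV[R]_q.+1 -> R), (1 <= p)%E -> in_Pi n P ->
        c1 * Lpnorm p P <= dnorm C v p P /\ dnorm C v p P <= c2 * Lpnorm p P) ->
     exists W : 'rV[R]_q.+1 -> R,
       (forall xi, xi \in C -> `|W xi| <= c c1 * v xi) /\
       (forall P, in_Pi n P -> \sum_(xi <- C) W xi * P xi = sph_int P)).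
Proof.
(* (a) does not need the orthonormality of y. *)
split=> [q n N C v y _ _ _ _ v_gt0 _ /posdef_unitmx Gu|].
  by split; [exact: wLSQ_exact | move=> w; exact: wLSQ_min_energy].
exists (fun c1 => c1^-1) => q n C v c1 c2 _ _ uC C_sph v_gt0 c1_gt0 _ MZ.
apply: exists_bounded_quadrature => // P PiP.
by have [] := MZ 1%:E P (lexx _) PiP.
Qed.
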